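(* Every fractal gasket $K$ satisfies the sharp separation condition: there is a constant $C'>0$ such that for every $k\ge1$ and all $I,J\in\Sigma^k$ with $\varphi_I(K)\cap\varphi_J(K)=\emptyset$, $$\operatorname{dist}(\varphi_I(K),\varphi_J(K))\ge C'\min\{\operatorname{diam}\varphi_I(K),\operatorname{diam}\varphi_J(K)\}.$$
   Context: Let $\Delta\subset\mathbb R^2$ be the triangle with vertices $(0,0)$, $(1,0)$, $(1/2,\sqrt3/2)$. A fractal gasket is the attractor $K$ (the nonempty compact set with $K=\bigcup_j\varphi_j(K)$) of $\{\varphi_j(z)=r_j(z+d_j)\}_{j=1}^N$, $r_j\in(0,1)$, $d_j\in\mathbb R^2$, such that $\bigcup_j\varphi_j(\Delta)\subset\Delta$ and, for $i\ne j$, $\varphi_i(\Delta)$ and $\varphi_j(\Delta)$ intersect only at common vertices. $\Sigma=\{1,\dots,N\}$; for $I=i_1\cdots i_k\in\Sigma^k$, $\varphi_I=\varphi_{i_1}\circ\cdots\circ\varphi_{i_k}$. $\operatorname{dist}(A,B)=\min\{\|a-b\|:a\in A,b\in B\}$. *)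

From mathcomp Require Import all_boot all_order all_algebra.
From mathcomp Require Import all_classical all_reals all_analysis.
Set Implicit Arguments. Unset Strict Implicit. Unset Printing Implicit Defensive.
Import Order.TTheory GRing.Theory Num.Theory numFieldNormedType.Exports.
Local Open Scope ring_scope.
Local Open Scope classical_set_scope.

Definition edist {R : realType} (p q : R * R) : R :=
  Num.sqrt ((p.1 - q.1) ^+ 2 + (p.2 - q.2) ^+ 2).

Definition triangle {R : realType} : set (R * R) :=
  [set p | exists a b c : R, [/\ 0 <= a, 0 <= b, 0 <= c, a + b + c = 1 &
      p = (b * 1 + c / 2, c * (Num.sqrt 3 / 2))]].

Definition tri_vertex {R : realType} : set (R * R) :=
  [set p | p = (0, 0) \/ p = (1, 0) \/ p = (2^-1, Num.sqrt 3 / 2)].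

Definition sim {R : realType} (r : R) (d : R * R) (z : R * R) : R * R :=
  (r * (z.1 + d.1), r * (z.2 + d.2)).

(* phi_I = phi_{i1} o ... o phi_{ik} for a word I = [:: i1; ...; ik] *)
Definition phiw {R : realType} (r : nat -> R) (d : nat -> R * R)
  (I : seq nat) : R * R -> R * R :=
  foldr (fun i f => sim (r i) (d i) \o f) id I.

Definition is_fractal_gasket {R : realType} (N : nat) (r : nat -> R)
  (d : nat -> R * R) (K : set (R * R)) : Prop :=
  [/\ (forall j, (j < N)%N -> 0 < r j < 1),
      (forall j, (j < N)%N -> sim (r j) (d j) @` triangle `<=` triangle),
      (forall i j, (i < N)%N -> (j < N)%N -> i <> j ->
         forall x, (sim (r i) (d i) @` triangle) x ->
                   (sim (r j) (d j) @` triangle) x ->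
           (exists2 v, tri_vertex v & x = sim (r i) (d i) v) /\
           (exists2 w, tri_vertex w & x = sim (r j) (d j) w)),
      K !=set0 /\ compact K &
      K = \bigcup_(j in [set j | (j < N)%N]) (sim (r j) (d j) @` K)].

Definition setdist {R : realType} (A B : set (R * R)) : R :=
  inf [set e | exists a b, [/\ A a, B b & e = edist a b]].

Definition diam {R : realType} (A : set (R * R)) : R :=
  sup [set e | exists a b, [/\ A a, A b & e = edist a b]].

From Pilot Require Import Defs.
From mathcomp Require Import all_boot all_order all_algebra.
From mathcomp Require Import all_classical all_reals all_analysis.
From mathcomp Require Import ring lra.
Import Order.TTheory GRing.Theory Num.Theory numFieldNormedType.Exports.
Set Implicit Arguments. Unset Strict Implicit. Unset Printing Implicit Defensive.
Local Open Scope ring_scope.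
Local Open Scope classical_set_scope.

(* Work in the affine coordinates (b, c) in which Δ = {b, c ≥ 0, b + c ≤ 1},
   with the ℓ¹ distance of these coordinates, which is within a factor 2 of
   the Euclidean one.  Each φ_j(Δ) is the triangle
   {b ≥ B_j, c ≥ C_j, b + c ≤ B_j + C_j + r_j}; since two of them meet only at
   common vertices, two distinct ones are either at a fixed positive distance
   or touch at a single point v, and then dist(a, v) ≤ 4 dist(a, b) for a, b
   in the two triangles.
   A cell φ_I(K) missing a vertex p of Δ is at distance ≳ r_I from p: either
   φ_{i_1} fixes p and we pass to the rest of the word, or p is at a fixed
   positive distance from φ_{i_1}(Δ).
   For disjoint cells φ_I(K), φ_J(K) of the same level, strip the common prefix
   of I and J: the next letters give two first-level triangles that are either
   far apart or touch at a point v that one of the two cells misses, so this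
   cell is ≳ its ratio away from v, hence from the other cell.  Finally K ⊆ Δ,
   so diam φ_I(K) ≤ 2 r_I. *)

Section BarycentricCoordinates.
Variable R : realType.
Implicit Types (b c r s B C : R) (z w v d : R * R).

(* The barycentric weights of z on the vertices (1, 0) and (1/2, √3/2) of Δ. *)
Definition baryb z : R := z.1 - z.2 / Num.sqrt 3.
Definition baryc z : R := 2 * z.2 / Num.sqrt 3.
Definition bary b c : R * R := (b + c / 2, c * (Num.sqrt 3 / 2)).
Definition bdist z w : R := `|baryb z - baryb w| + `|baryc z - baryc w|.

Lemma sqrt3_gt0 : 0 < Num.sqrt 3 :> R.
Proof. by rewrite sqrtr_gt0. Qed.

Lemma barybK b c : baryb (bary b c) = b.
Proof. by rewrite /baryb /=; field; rewrite gt_eqF // sqrt3_gt0. Qed.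

Lemma barycK b c : baryc (bary b c) = c.
Proof. by rewrite /baryc /=; field; rewrite gt_eqF // sqrt3_gt0. Qed.

Lemma baryE z : bary (baryb z) (baryc z) = z.
Proof.
case: z => x y; rewrite /bary /baryb /baryc /=.
by congr pair; field; rewrite gt_eqF // sqrt3_gt0.
Qed.

Lemma bary_inj z w : baryb z = baryb w -> baryc z = baryc w -> z = w.
Proof. by move=> eb ec; rewrite -(baryE z) -(baryE w) eb ec. Qed.

Lemma baryb_sim r d z : baryb (sim r d z) = r * (baryb z + baryb d).
Proof. by rewrite /baryb /sim /=; field; rewrite gt_eqF // sqrt3_gt0. Qed.

Lemma baryc_sim r d z : baryc (sim r d z) = r * (baryc z + baryc d).
Proof. by rewrite /baryc /sim /=; field; rewrite gt_eqF // sqrt3_gt0. Qed.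

Lemma bdist_ge0 z w : 0 <= bdist z w.
Proof. by rewrite addr_ge0. Qed.

Lemma bdistC z w : bdist z w = bdist w z.
Proof. by rewrite /bdist distrC [`|baryc z - _|]distrC. Qed.

Lemma bdist_gt0 z w : z <> w -> 0 < bdist z w.
Proof.
move=> zw; rewrite lt_neqAle bdist_ge0 andbT eq_sym paddr_eq0 ?normr_ge0 //.
by apply/negP => /andP[/eqP/normr0_eq0/subr0_eq eb /eqP/normr0_eq0/subr0_eq ec];
  apply: zw; apply: bary_inj.
Qed.

Lemma bdist_sim r d z w : 0 <= r -> bdist (sim r d z) (sim r d w) = r * bdist z w.
Proof.
move=> r0; rewrite /bdist !baryb_sim !baryc_sim -!mulrBr.
by rewrite [baryb w + _]addrC [baryc w + _]addrC !addrKA !normrM ger0_norm // mulrDr.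
Qed.

Lemma edist_bary z w : Defs.edist z w = Num.sqrt ((baryb z - baryb w) ^+ 2
  + (baryb z - baryb w) * (baryc z - baryc w) + (baryc z - baryc w) ^+ 2).
Proof.
rewrite -{1}(baryE z) -{1}(baryE w) /Defs.edist /bary /=; congr Num.sqrt.
have s3 : Num.sqrt 3 ^+ 2 = 3 :> R by rewrite sqr_sqrtr.
by rewrite -mulrBl exprMn expr_div_n s3; field.
Qed.

Lemma bdist_le_edist z w : bdist z w / 2 <= Defs.edist z w.
Proof.
rewrite edist_bary /bdist; set u := baryb z - baryb w; set v := baryc z - baryc w.
rewrite -[leLHS]ger0_norm ?divr_ge0 ?addr_ge0 // -sqrtr_sqr ler_wsqrtr //.
have uv : `|u * v| = `|u| * `|v| by rewrite normrM.
have := ler_norm (u * v); have := ler_norm (- (u * v)); rewrite normrN.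
rewrite -[u ^+ 2]real_normK ?num_real // -[v ^+ 2]real_normK ?num_real // uv.
have := sqr_ge0 (`|u| - `|v|); rewrite !expr2; lra.
Qed.

Lemma edist_le_bdist z w : Defs.edist z w <= bdist z w.
Proof.
rewrite edist_bary /bdist; set u := baryb z - baryb w; set v := baryc z - baryc w.
rewrite -[leRHS]ger0_norm ?addr_ge0 // -sqrtr_sqr ler_wsqrtr //.
rewrite -[u ^+ 2]real_normK ?num_real // -[v ^+ 2]real_normK ?num_real //.
have := ler_norm (u * v); rewrite normrM.
have := mulr_ge0 (normr_ge0 u) (normr_ge0 v); rewrite !expr2; lra.
Qed.

Lemma coord_le_bdist z w : `|z.1 - w.1| <= bdist z w /\ `|z.2 - w.2| <= bdist z w.
Proof.
have s0 := sqrt3_gt0; have := sqr_sqrtr (ler0n R 3); rewrite expr2 => s3.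
have s2 : Num.sqrt 3 < 2 :> R by nra.
rewrite /bdist; set u := baryb z - baryb w; set v := baryc z - baryc w.
have -> : z.1 - w.1 = u + v / 2.
  by rewrite /u /v /baryb /baryc; field; rewrite gt_eqF.
have -> : z.2 - w.2 = v * (Num.sqrt 3 / 2).
  by rewrite /v /baryc; field; rewrite gt_eqF.
have n2 : `|2^-1 : R| = 2^-1 by rewrite ger0_norm.
have ns : `|Num.sqrt 3 / 2 : R| = Num.sqrt 3 / 2 by rewrite ger0_norm ?divr_ge0.
have := ler_normD u (v / 2); rewrite [`|v / 2|]normrM [`|v * _|]normrM n2 ns.
have := normr_ge0 u; have := normr_ge0 v; split; nra.
Qed.

Definition htri B C s : set (R * R) :=
  [set z | [/\ B <= baryb z, C <= baryc z & baryb z + baryc z <= B + C + s]].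

Definition vertices : seq (R * R) := [:: bary 0 0; bary 1 0; bary 0 1].

Definition corners B C s : seq (R * R) := [:: bary B C; bary (B + s) C; bary B (C + s)].

Lemma triangle_htri : triangle = htri 0 0 1.
Proof.
apply/seteqP; split => z.
  case=> a [b [c [a0 b0 c0 abc ->]]].
  by rewrite mulr1 -/(bary b c) /htri /= barybK barycK; split; lra.
case=> b0 c0 bc1; exists (1 - baryb z - baryc z), (baryb z), (baryc z).
by rewrite mulr1 -/(bary _ _) baryE; split => //; lra.
Qed.

Lemma sim_triangle r d : 0 < r ->
  sim r d @` triangle = htri (r * baryb d) (r * baryc d) r.
Proof.
move=> r0; rewrite triangle_htri; apply/seteqP; split => w.
  by case=> z [z1 z2 z3] <-; rewrite /htri /= baryb_sim baryc_sim; split; nra.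
case=> w1 w2 w3; exists (bary (baryb w / r - baryb d) (baryc w / r - baryc d)).
  have eb : baryb w / r - baryb d = (baryb w - r * baryb d) / r.
    by field; rewrite gt_eqF.
  have ec : baryc w / r - baryc d = (baryc w - r * baryc d) / r.
    by field; rewrite gt_eqF.
  rewrite /htri /= barybK barycK eb ec !add0r -mulrDl ler_pdivrMr //.
  by split; rewrite ?divr_ge0 ?subr_ge0 ?(ltW r0) //; lra.
by apply: bary_inj; rewrite ?baryb_sim ?baryc_sim ?barybK ?barycK; field; rewrite gt_eqF.
Qed.

Lemma tri_vertex_vertices v : tri_vertex v -> v \in vertices.
Proof.
have s0 := sqrt3_gt0.
by case=> [|[|]] ->; rewrite !inE; apply/or3P;
  [apply: Or31 | apply: Or32 | apply: Or33]; apply/eqP/bary_inj;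
  rewrite ?barybK ?barycK /baryb /baryc /=; field; rewrite gt_eqF.
Qed.

Lemma sim_vertex r d v : v \in vertices ->
  sim r d v \in corners (r * baryb d) (r * baryc d) r.
Proof.
rewrite !inE => /or3P[]/eqP-> ; apply/or3P;
  [apply: Or31 | apply: Or32 | apply: Or33]; apply/eqP/bary_inj;
  rewrite ?baryb_sim ?baryc_sim ?barybK ?barycK; ring.
Qed.

Lemma bdist_triangle_le2 z w : triangle z -> triangle w -> bdist z w <= 2.
Proof.
rewrite triangle_htri /bdist => -[? ? ?] [? ? ?].
have : `|baryb z - baryb w| <= 1 /\ `|baryc z - baryc w| <= 1.
  by rewrite !ler_norml; split; apply/andP; split; lra.
lra.
Qed.

Lemma htri_sub_triangle B C s : 0 <= s -> htri B C s `<=` triangle ->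
  [/\ 0 <= B, 0 <= C & B + C + s <= 1].
Proof.
rewrite triangle_htri => s0 sub.
have /sub[] : htri B C s (bary B C).
  by rewrite /htri /= barybK barycK; split; lra.
have /sub[] : htri B C s (bary (B + s) C).
  by rewrite /htri /= barybK barycK; split; lra.
rewrite !barybK !barycK; split; lra.
Qed.

Lemma sim_vertex_closest r d v z : 0 < r -> sim r d @` triangle `<=` triangle ->
  v \in vertices -> (sim r d @` triangle) z -> bdist (sim r d v) v <= bdist z v.
Proof.
move=> r0; rewrite sim_triangle // => /htri_sub_triangle-/(_ (ltW r0))[B0 C0 S1].
move=> + [z1 z2 z3]; rewrite !inE => /or3P[]/eqP->;
  rewrite /bdist !baryb_sim !baryc_sim !barybK !barycK !add0r ?(mulrDr r 1) ?mulr1 !subr0.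
- by rewrite !ger0_norm //; lra.
- by rewrite (ler0_norm (x := r + r * baryb d - 1)) ?(ler0_norm (x := baryb z - 1))
    ?ger0_norm //; lra.
- by rewrite (ler0_norm (x := r + r * baryc d - 1)) ?(ler0_norm (x := baryc z - 1))
    ?ger0_norm //; lra.
Qed.

(* htri B1 C1 s1 `&` htri B2 C2 s2 = htri (max B1 B2) (max C1 C2) (overlap ...),
   which is empty when the overlap is negative and the single point
   bary (max B1 B2) (max C1 C2) when it is zero. *)
Definition overlap B1 C1 s1 B2 C2 s2 : R :=
  Num.min (B1 + C1 + s1) (B2 + C2 + s2) - Num.max B1 B2 - Num.max C1 C2.

Lemma overlapC B1 C1 s1 B2 C2 s2 :
  overlap B1 C1 s1 B2 C2 s2 = overlap B2 C2 s2 B1 C1 s1.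
Proof. by rewrite /overlap minC maxC [Num.max C1 _]maxC. Qed.

Lemma overlap_gt0 B1 C1 s1 B2 C2 s2 : 0 < overlap B1 C1 s1 B2 C2 s2 ->
  exists2 z, htri B1 C1 s1 z /\ htri B2 C2 s2 z & z \notin corners B1 C1 s1.
Proof.
rewrite /overlap; set e := _ - _ - _ => e0.
exists (bary (Num.max B1 B2 + e / 3) (Num.max C1 C2 + e / 3)).
  rewrite /htri /= barybK barycK /e; move: e0; rewrite /e.
  by case: (leP B1 B2); case: (leP C1 C2); case: (leP (B1 + C1 + s1) (B2 + C2 + s2));
    do ! split; lra.
apply/negP; rewrite !inE => /or3P[]/eqP/(congr1 (fun z => (baryb z, baryc z)))/=;
  rewrite !barybK !barycK => -[]; move: e0; rewrite /e;
  by case: (leP B1 B2); case: (leP C1 C2); case: (leP (B1 + C1 + s1) (B2 + C2 + s2)); lra.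
Qed.

Lemma overlap_lt0_bdist B1 C1 s1 B2 C2 s2 z w : overlap B1 C1 s1 B2 C2 s2 < 0 ->
  htri B1 C1 s1 z -> htri B2 C2 s2 w -> - overlap B1 C1 s1 B2 C2 s2 <= bdist z w.
Proof.
move=> + [z1 z2 z3] [w1 w2 w3]; rewrite /bdist.
have := (ler_norm (baryb z - baryb w), ler_norm (baryb w - baryb z)).
have := (ler_norm (baryc z - baryc w), ler_norm (baryc w - baryc z)).
rewrite !(distrC (baryb w)) !(distrC (baryc w)) /overlap => -[? ?] [? ?].
by case: (leP B1 B2); case: (leP C1 C2); case: (leP (B1 + C1 + s1) (B2 + C2 + s2)); lra.
Qed.

Lemma overlap0_contact B1 C1 s1 B2 C2 s2 : overlap B1 C1 s1 B2 C2 s2 = 0 ->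
  htri B1 C1 s1 (bary (Num.max B1 B2) (Num.max C1 C2)).
Proof.
rewrite /overlap /htri /= barybK barycK.
by case: (leP B1 B2); case: (leP C1 C2); case: (leP (B1 + C1 + s1) (B2 + C2 + s2));
  split; lra.
Qed.

Lemma overlap0_bdist B1 C1 s1 B2 C2 s2 z w : overlap B1 C1 s1 B2 C2 s2 = 0 ->
  htri B1 C1 s1 z -> htri B2 C2 s2 w ->
  bdist z (bary (Num.max B1 B2) (Num.max C1 C2)) <= 4 * bdist z w.
Proof.
move=> + [z1 z2 z3] [w1 w2 w3]; rewrite /bdist barybK barycK.
have := (ler_norm (baryb z - baryb w), ler_norm (baryb w - baryb z)).
have := (ler_norm (baryc z - baryc w), ler_norm (baryc w - baryc z)).
rewrite !(distrC (baryb w)) !(distrC (baryc w)) /overlap => -[? ?] [? ?] E0.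
suff : `|baryb z - Num.max B1 B2| <= 2 * bdist z w /\
       `|baryc z - Num.max C1 C2| <= 2 * bdist z w by rewrite /bdist; lra.
rewrite /bdist !ler_norml; move: E0.
by case: (leP B1 B2); case: (leP C1 C2); case: (leP (B1 + C1 + s1) (B2 + C2 + s2));
  do ! split; lra.
Qed.

End BarycentricCoordinates.

Arguments vertices {R}.

Lemma finite_pos_lbound (R : realDomainType) (s : seq R) :
  exists2 e : R, 0 < e & forall x, x \in s -> 0 < x -> e <= x.
Proof.
elim: s => [|x s [e e0 le_e]]; first by exists 1.
have [x0|x_le0] := ltP 0 x.
  exists (Num.min e x); first by rewrite lt_min e0.
  by move=> y; rewrite inE => /orP[/eqP-> _|/le_e le_y /le_y]; rewrite ge_min ?lexx ?orbT // => ->.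
exists e => // y; rewrite inE => /orP[/eqP-> x0|/le_e//].
by move: x_le0; rewrite leNgt x0.
Qed.

Lemma contraction_lbound_ge0 (R : realType) (T : Type) (S : set T) (f : T -> R) rho :
  rho < 1 -> S !=set0 -> (exists M, forall x, S x -> M <= f x) ->
  (forall x, S x -> exists2 y, S y & exists2 t, 0 <= t <= rho & t * f y <= f x) ->
  forall x, S x -> 0 <= f x.
Proof.
move=> rho1 [x0 Sx0] [M leM] step x Sx.
have lbS : has_lbound (f @` S) by exists M => _ [y Sy <-]; exact: leM.
have inf_le y : S y -> inf (f @` S) <= f y by move=> Sy; apply: ge_inf => //; exists y.
have [m0|m_lt0] := leP 0 (inf (f @` S)); first exact: le_trans m0 (inf_le x Sx).
suff : rho * inf (f @` S) <= inf (f @` S) by nra.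
apply: lb_le_inf; first by exists (f x0), x0.
move=> _ [y Sy <-]; have [y' Sy' [t /andP[t0 t_rho] le_t]] := step y Sy.
have := inf_le y' Sy'; nra.
Qed.

Lemma closed_bdist_lbound (R : realType) (K : set (R * R)) (ps : seq (R * R)) :
  closed K -> exists2 e : R, 0 < e &
    forall p, p \in ps -> ~ K p -> forall z, K z -> e <= bdist z p.
Proof.
move=> clK; elim: ps => [|p ps [e e0 le_e]]; first by exists 1.
have [e' e'0 le_e'] : exists2 e' : R, 0 < e' & ~ K p -> forall z, K z -> e' <= bdist z p.
  have [Kp|nKp] := pselect (K p); first by exists 1.
  have /nbhs_ballP[e' e'0 ballK] := closed_openC clK p nKp.
  exists e' => // _ z Kz; have [le1 le2] := coord_le_bdist z p.
  have [lt1|] := ltP `|z.1 - p.1| e'; last by move/le_trans; apply.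
  have [lt2|] := ltP `|z.2 - p.2| e'; last by move/le_trans; apply.
  by exfalso; apply: (ballK z) => //; split; rewrite /ball /= distrC.
exists (Num.min e e'); first by rewrite lt_min e0.
move=> q; rewrite inE => /orP[/eqP-> nKp z Kz|/le_e le_q nKq z /(le_q nKq)].
  by rewrite ge_min le_e' ?orbT.
by rewrite ge_min => ->.
Qed.

Lemma diam_le (R : realType) (A : set (R * R)) (m : R) : A !=set0 ->
  (forall a b, A a -> A b -> Defs.edist a b <= m) -> diam A <= m.
Proof.
move=> [a Aa] le_m; apply: ge_sup; first by exists (Defs.edist a a), a, a.
by move=> _ [x [y [Ax Ay ->]]]; exact: le_m.
Qed.

Lemma setdist_ge (R : realType) (A B : set (R * R)) (m : R) : A !=set0 -> B !=set0 ->
  (forall a b, A a -> B b -> m <= Defs.edist a b) -> m <= setdist A B.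
Proof.
move=> [a Aa] [b Bb] ge_m; apply: lb_le_inf; first by exists (Defs.edist a b), a, b.
by move=> _ [x [y [Ax By ->]]]; exact: ge_m.
Qed.

Lemma compact_bary_lbound (R : realType) (K : set (R * R)) : compact K ->
  exists M : R, forall z, K z ->
    [/\ M <= baryb z, M <= baryc z & M <= 1 - baryb z - baryc z].
Proof.
move=> /compact_bounded[M [_ leM]]; exists (- 4 * (M + 1)) => z Kz.
have := leM (M + 1) (ltr_pwDr ltr01 (lexx M)) z Kz.
rewrite /= prod_normE ge_max => /andP[le1 le2].
have s0 := @sqrt3_gt0 R; have := sqr_sqrtr (ler0n R 3); rewrite expr2 => s3.
have le3 : `|z.2 / Num.sqrt 3| <= M + 1.
  apply: le_trans le2; rewrite normrM normfV [`|Num.sqrt 3|]ger0_norm ?(ltW s0) //.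
  by rewrite ler_pdivrMr // ler_peMr //; nra.
move: le1 le3; rewrite /baryb /baryc -mulrA !ler_norml => /andP[? ?] /andP[? ?].
by split; lra.
Qed.

Section Gasket.
Variables (R : realType) (N : nat) (r : nat -> R) (d : nat -> R * R) (K : set (R * R)).
Hypothesis gasketK : is_fractal_gasket N r d K.

Local Notation word I := (all (fun i => (i < N)%N) I).

Definition ratio (I : seq nat) : R := foldr (fun i a => r i * a) 1 I.

Lemma r_gt0 j : (j < N)%N -> 0 < r j.
Proof. by case: gasketK => + _ _ _ _ => /[apply] /andP[]. Qed.

Lemma r_lt1 j : (j < N)%N -> r j < 1.
Proof. by case: gasketK => + _ _ _ _ => /[apply] /andP[]. Qed.

Lemma cell_sub_triangle j : (j < N)%N -> sim (r j) (d j) @` triangle `<=` triangle.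
Proof. by case: gasketK => _ + _ _ _; apply. Qed.

Lemma ratio_gt0 I : word I -> 0 < ratio I.
Proof.
by elim: I => [|i I IH] //= /andP[/r_gt0 ri /IH]; apply: mulr_gt0.
Qed.

Lemma ratio_le1 I : word I -> ratio I <= 1.
Proof.
elim: I => [|i I IH] //= /andP[iN wI].
by rewrite mulr_ile1 ?IH // ltW ?r_lt1 ?r_gt0 ?ratio_gt0.
Qed.

Lemma cell_neq0 I : phiw r d I @` K !=set0.
Proof. by case: gasketK => _ _ _ [[z Kz] _] _; exists (phiw r d I z), z. Qed.

Lemma bdist_phiw I z w : word I ->
  bdist (phiw r d I z) (phiw r d I w) = ratio I * bdist z w.
Proof.
elim: I => [|i I IH] /=; first by rewrite mul1r.
by move=> /andP[iN wI]; rewrite bdist_sim ?IH ?mulrA // ltW ?r_gt0.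
Qed.

Lemma phiw_triangle I z : word I -> triangle z -> triangle (phiw r d I z).
Proof.
elim: I => [|i I IH] //= /andP[iN wI] tz.
by apply: (cell_sub_triangle iN); exists (phiw r d I z) => //; apply: IH.
Qed.

Lemma K_sub_triangle : K `<=` triangle.
Proof.
case: gasketK => _ _ _ [K0 cK] K_cells.
have [M leM] := compact_bary_lbound cK.
have [e e0 le_e] := finite_pos_lbound [seq 1 - r j | j <- iota 0 N].
(* Each of b, c, 1 - b - c is bounded below on K and satisfies f (φ_j y) ≥ r_j f y. *)
have ge0 (f : R * R -> R) : (forall z, K z -> M <= f z) ->
    (forall j y, (j < N)%N -> r j * f y <= f (sim (r j) (d j) y)) ->
    forall z, K z -> 0 <= f z.
  move=> lbf stepf; apply: (@contraction_lbound_ge0 _ _ _ _ (1 - e)) => //.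
  - by rewrite ltrBlDr ltrDl.
  - by exists M.
  move=> x; rewrite {1}K_cells => -[j jN [y Ky <-]]; exists y => //; exists (r j).
    have jI : j \in iota 0 N by rewrite mem_iota.
    have rj1 : 0 < 1 - r j by rewrite subr_gt0 r_lt1.
    have := le_e _ (map_f (fun i => 1 - r i) jI) rj1.
    by move=> le_e1; apply/andP; split; [exact/ltW/r_gt0 | lra].
  exact: stepf.
have cell_par j : (j < N)%N -> [/\ 0 <= r j * baryb (d j), 0 <= r j * baryc (d j)
    & r j * baryb (d j) + r j * baryc (d j) + r j <= 1].
  move=> jN; apply: htri_sub_triangle; first exact/ltW/r_gt0.
  by rewrite -sim_triangle ?r_gt0 //; apply: cell_sub_triangle.
move=> z Kz; rewrite triangle_htri; split.
- apply: (ge0 (@baryb R) _ _ z Kz); first by move=> ? /leM[].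
  by move=> j y /cell_par[? ? ?]; rewrite baryb_sim; lra.
- apply: (ge0 (@baryc R) _ _ z Kz); first by move=> ? /leM[].
  by move=> j y /cell_par[? ? ?]; rewrite baryc_sim; lra.
- suff : 0 <= 1 - baryb z - baryc z by lra.
  apply: (ge0 (fun z => 1 - baryb z - baryc z) _ _ z Kz); first by move=> ? /leM[].
  by move=> j y /cell_par[? ? ?]; rewrite /= baryb_sim baryc_sim; lra.
Qed.

Definition vertex_sep_const (c : R) := forall I p, word I -> p \in vertices ->
  ~ (phiw r d I @` K) p -> forall z, (phiw r d I @` K) z -> c * ratio I <= bdist z p.

Lemma exists_vertex_sep_const : exists2 c, 0 < c & vertex_sep_const c.
Proof.
have clK : closed K.
  by case: gasketK => _ _ _ [_ cK] _; apply: compact_closed cK; apply: norm_hausdorff.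
have [eK eK0 le_eK] := closed_bdist_lbound vertices clK.
have [e e0 le_e] := finite_pos_lbound
  [seq bdist (sim (r j) (d j) p) p | j <- iota 0 N, p <- vertices].
exists (Num.min eK e); first by rewrite lt_min eK0.
elim=> [|j I IH] p /=.
  move=> _ pV npK _ [z Kz <-]; rewrite mulr1 ge_min le_eK //.
  by move=> Kp; apply: npK; exists p.
move=> /andP[jN wI] pV npI _ [y Ky <-].
have [fixp|nfixp] := pselect (sim (r j) (d j) p = p).
  have npI' : ~ (phiw r d I @` K) p.
    by case=> y' Ky' ey'; apply: npI; exists y' => //=; rewrite ey' fixp.
  rewrite -[X in bdist _ X]fixp bdist_sim ?(ltW (r_gt0 jN)) // mulrCA.
  by rewrite ler_wpM2l ?(ltW (r_gt0 jN)) //; apply: IH => //; exists y.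
have jcell : (sim (r j) (d j) @` triangle) (sim (r j) (d j) (phiw r d I y)).
  by exists (phiw r d I y) => //; apply: phiw_triangle => //; apply: K_sub_triangle.
have := sim_vertex_closest (r_gt0 jN) (cell_sub_triangle jN) pV jcell.
have jI : j \in iota 0 N by rewrite mem_iota.
have := le_e _ (allpairs_f (fun j p => bdist (sim (r j) (d j) p) p) jI pV) (bdist_gt0 nfixp).
have le1 : r j * ratio I <= 1 by apply: (ratio_le1 (I := j :: I)); rewrite /= jN.
have min_e : Num.min eK e <= e by rewrite ge_min lexx orbT.
have min0 : 0 <= Num.min eK e by rewrite le_min !ltW.
have := ler_piMr min0 le1; lra.
Qed.

Definition cell_overlap i j := overlap (r i * baryb (d i)) (r i * baryc (d i)) (r i)
  (r j * baryb (d j)) (r j * baryc (d j)) (r j).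

Definition contact i j := bary (Num.max (r i * baryb (d i)) (r j * baryb (d j)))
  (Num.max (r i * baryc (d i)) (r j * baryc (d j))).

Lemma contactC i j : contact i j = contact j i.
Proof. by rewrite /contact maxC [Num.max (r i * baryc _) _]maxC. Qed.

Lemma cell_overlap_le0 i j : (i < N)%N -> (j < N)%N -> i <> j -> cell_overlap i j <= 0.
Proof.
move=> iN jN ij; rewrite leNgt; apply/negP => /overlap_gt0[z [zi zj]].
rewrite -sim_triangle ?r_gt0 // in zi; rewrite -sim_triangle ?r_gt0 // in zj.
case: gasketK => _ _ meet _ _.
have [[v /tri_vertex_vertices vV ->] _] := meet i j iN jN ij z zi zj.
by rewrite sim_vertex.
Qed.

Lemma subcell_sub_cell i I z : word I -> (phiw r d (i :: I) @` K) z ->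
  (sim (r i) (d i) @` triangle) z.
Proof.
move=> wI [y Ky <-]; exists (phiw r d I y) => //.
by apply: phiw_triangle => //; apply: K_sub_triangle.
Qed.

Lemma cells_disjoint_cons i I J :
  phiw r d (i :: I) @` K `&` phiw r d (i :: J) @` K = set0 ->
  phiw r d I @` K `&` phiw r d J @` K = set0.
Proof.
move=> dis; apply/seteqP; split => // x [[y Ky ey] [y' Ky' ey']].
have : (phiw r d (i :: I) @` K `&` phiw r d (i :: J) @` K) (sim (r i) (d i) x).
  by split; [exists y | exists y']; rewrite /= ?ey ?ey'.
by rewrite dis.
Qed.

Lemma contact_sep c i j I z w : vertex_sep_const c ->
  (i < N)%N -> (j < N)%N -> i <> j -> cell_overlap i j = 0 -> word I ->
  ~ (phiw r d (i :: I) @` K) (contact i j) -> (phiw r d (i :: I) @` K) z ->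
  (sim (r j) (d j) @` triangle) w -> c * ratio (i :: I) <= 4 * bdist z w.
Proof.
move=> sepc iN jN ij ov0 wI nv zI; rewrite sim_triangle ?r_gt0 // => wj.
have zi := subcell_sub_cell wI zI; rewrite sim_triangle ?r_gt0 // in zi.
have vi := overlap0_contact ov0.
have vj : htri (r j * baryb (d j)) (r j * baryc (d j)) (r j) (contact i j).
  have ov0' : cell_overlap j i = 0 by rewrite /cell_overlap overlapC.
  by rewrite contactC; exact: overlap0_contact ov0'.
rewrite -sim_triangle ?r_gt0 // in vi; rewrite -sim_triangle ?r_gt0 // in vj.
case: gasketK => _ _ meet _ _.
have [[p /tri_vertex_vertices pV ep] _] := meet i j iN jN ij _ vi vj.
case: zI => y Ky ez.
have npI : ~ (phiw r d I @` K) p.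
  by case=> y' Ky' ey'; apply: nv; exists y' => //=; rewrite ey'; exact: esym ep.
have := sepc I p wI pV npI (phiw r d I y) (ex_intro2 _ _ y Ky erefl).
have := overlap0_bdist ov0 zi wj; rewrite ep -ez /=.
rewrite bdist_sim ?(ltW (r_gt0 iN)) //.
have := r_gt0 iN; nra.
Qed.

Lemma distinct_letters_sep c e i j I J z w : 0 < c -> vertex_sep_const c -> 0 < e ->
  (forall i j, (i < N)%N -> (j < N)%N -> cell_overlap i j < 0 ->
     e <= - cell_overlap i j) ->
  (i < N)%N -> (j < N)%N -> i <> j -> word I -> word J ->
  phiw r d (i :: I) @` K `&` phiw r d (j :: J) @` K = set0 ->
  (phiw r d (i :: I) @` K) z -> (phiw r d (j :: J) @` K) w ->
  Num.min e (c / 4) * Num.min (ratio (i :: I)) (ratio (j :: J)) <= bdist z w.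
Proof.
move=> c0 sepc e0 le_e iN jN ij wI wJ dis zI wJJ.
set m := Num.min e (c / 4); set rho := Num.min (ratio (i :: I)) (ratio (j :: J)).
have m0 : 0 <= m by rewrite le_min !ltW ?divr_gt0.
have rho0 : 0 <= rho by rewrite le_min !ltW ?ratio_gt0 //= ?iN ?jN.
have [lt0|gt0|eq0] := ltgtP (cell_overlap i j) 0.
- have zi := subcell_sub_cell wI zI; rewrite sim_triangle ?r_gt0 // in zi.
  have wj := subcell_sub_cell wJ wJJ; rewrite sim_triangle ?r_gt0 // in wj.
  have := overlap_lt0_bdist lt0 zi wj; rewrite -/(cell_overlap i j).
  have := le_e i j iN jN lt0.
  have rho1 : rho <= 1 by rewrite ge_min ratio_le1 //= iN.
  have := ler_piMr m0 rho1; have : m <= e by rewrite ge_min lexx.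
  lra.
- by have := cell_overlap_le0 iN jN ij; lra.
have le_m (x : R) : rho <= x -> m * rho <= c / 4 * x.
  by move=> le_x; rewrite ler_pM // ge_min lexx orbT.
have [vI|nvI] := pselect ((phiw r d (i :: I) @` K) (contact i j)).
  have nvJ : ~ (phiw r d (j :: J) @` K) (contact j i).
    by rewrite contactC => vJ; have : (set0 : set (R * R)) (contact i j) by rewrite -dis.
  have eq0' : cell_overlap j i = 0 by rewrite /cell_overlap overlapC.
  have := contact_sep sepc jN iN (nesym ij) eq0' wJ nvJ wJJ (subcell_sub_cell wI zI).
  have : rho <= ratio (j :: J) by rewrite ge_min lexx orbT.
  by rewrite bdistC => /le_m; lra.
have := contact_sep sepc iN jN ij eq0 wI nvI zI (subcell_sub_cell wJ wJJ).
have : rho <= ratio (i :: I) by rewrite ge_min lexx.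
by move=> /le_m; lra.
Qed.

Lemma cell_separation : exists2 c, 0 < c & forall I J, size I = size J -> word I -> word J ->
  phiw r d I @` K `&` phiw r d J @` K = set0 ->
  forall z w, (phiw r d I @` K) z -> (phiw r d J @` K) w ->
  c * Num.min (ratio I) (ratio J) <= bdist z w.
Proof.
have [c c0 sepc] := exists_vertex_sep_const.
have [e e0 le_e] := finite_pos_lbound
  [seq - cell_overlap i j | i <- iota 0 N, j <- iota 0 N].
exists (Num.min e (c / 4)); first by rewrite lt_min e0 divr_gt0.
elim=> [|i I IH] [|j J] //=.
  move=> _ _ _ dis; have [z Kz] := cell_neq0 [::].
  by have : (set0 : set (R * R)) z by rewrite -dis.
move=> [sIJ] /andP[iN wI] /andP[jN wJ] dis z w zI wJJ.
have [eij|/eqP ij] := eqVneq i j; last first.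
  apply: (distinct_letters_sep c0 sepc e0 _ iN jN ij wI wJ dis zI wJJ).
  by move=> i' j' i'N j'N lt0; apply: le_e; rewrite ?oppr_gt0 // allpairs_f ?mem_iota.
subst j; case: zI => y Ky <-; case: wJJ => y' Ky' <-.
have ri0 := ltW (r_gt0 iN).
rewrite /= bdist_sim // -minr_pMr // mulrCA ler_wpM2l //.
by apply: (IH J sIJ wI wJ (cells_disjoint_cons dis)); [exists y | exists y'].
Qed.

Lemma diam_cell_le I : word I -> diam (phiw r d I @` K) <= 2 * ratio I.
Proof.
move=> wI; apply: diam_le; first exact: cell_neq0.
move=> _ _ [y Ky <-] [y' Ky' <-]; apply: le_trans (edist_le_bdist _ _) _.
rewrite bdist_phiw // mulrC ler_pM2r ?ratio_gt0 //.
by apply: bdist_triangle_le2; apply: K_sub_triangle.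
Qed.

End Gasket.

Theorem lemma4p2 (R : realType) (N : nat) (r : nat -> R) (d : nat -> R * R)
  (K : set (R * R)) :
  is_fractal_gasket N r d K ->
  exists C' : R, 0 < C' /\
    forall (k : nat) (I J : seq nat), (1 <= k)%N ->
      size I = k -> size J = k ->
      all (fun i => (i < N)%N) I -> all (fun j => (j < N)%N) J ->
      phiw r d I @` K `&` phiw r d J @` K = set0 ->
      C' * Num.min (diam (phiw r d I @` K)) (diam (phiw r d J @` K))
        <= setdist (phiw r d I @` K) (phiw r d J @` K).
Proof.
move=> gasketK; have [c c0 sep] := cell_separation gasketK.
exists (c / 4); split => [|k I J _ sI sJ wI wJ dis]; first by rewrite divr_gt0.
have sIJ : size I = size J by rewrite sI sJ.
have dist_ge : c * Num.min (ratio r I) (ratio r J) / 2 <=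
    setdist (phiw r d I @` K) (phiw r d J @` K).
  apply: setdist_ge; try exact: cell_neq0 gasketK _.
  move=> z w zI wJJ; have := bdist_le_edist z w.
  by have := sep I J sIJ wI wJ dis z w zI wJJ; lra.
have := le_min2 (diam_cell_le gasketK wI) (diam_cell_le gasketK wJ).
rewrite -minr_pMr // => /(ler_wpM2l (ltW (divr_gt0 c0 (ltr0n _ 4)))); lra.
Qed.
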